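(* Let $t(x_1,\dots,x_n)$ be a term in the language of strong quasi-MV* algebras containing at least one occurrence of $\oplus$. Then for all $\langle a_1,b_1\rangle,\dots,\langle a_n,b_n\rangle\in S^*$, $$t^{\mathbf{S^*}}(\langle a_1,b_1\rangle,\dots,\langle a_n,b_n\rangle)=t^{\mathbf{S^*}}(\langle a_1,0\rangle,\dots,\langle a_n,0\rangle)=\langle z,0\rangle$$ for some $z\in[-1,1]$.
   Context: Terms in the language of strong quasi-MV* algebras are built from variables and constants $0,1$ using a binary operation $\oplus$ and unary operations $-,{}^+,{}^-$. $\mathbf{S^*}$ is the algebra with universe $S^*=[-1,1]\times[-1,1]\subseteq\mathbb{R}^2$ and operations $\langle a,b\rangle\oplus\langle c,d\rangle=\langle\max\{-1,\min\{1,a+c\}\},0\rangle$, $-\langle a,b\rangle=\langle -a,-b\rangle$, $\langle a,b\rangle^+=\langle\max\{0,a\},0\rangle$, $\langle a,b\rangle^-=\langle\min\{0,a\},0\rangle$, $0=\langle 0,0\rangle$, $1=\langle 1,0\rangle$; $t^{\mathbf{S^*}}$ denotes the term function of $t$ on $\mathbf{S^*}$. *)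

From Stdlib Require Import Reals Lra Lia.
Open Scope R_scope.

(* Terms of the language of strong quasi-MV* algebras:
   variables x_i (i : nat), constants 0,1, binary (+), unary -, ^+, ^-. *)
Inductive term : Type :=
  | Var : nat -> term
  | TZero : term
  | TOne : term
  | TOplus : term -> term -> term
  | TNeg : term -> term
  | TPos : term -> term
  | TNegP : term -> term.

Fixpoint has_oplus (t : term) : Prop :=
  match t with
  | Var _ | TZero | TOne => False
  | TOplus _ _ => True
  | TNeg u | TPos u | TNegP u => has_oplus u
  end.

Fixpoint vars_below (n : nat) (t : term) : Prop :=
  match t with
  | Var i => (i < n)%nat
  | TZero | TOne => True
  | TOplus u v => vars_below n u /\ vars_below n v
  | TNeg u | TPos u | TNegP u => vars_below n u
  end.

Definition inS (p : R * R) : Prop :=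
  -1 <= fst p <= 1 /\ -1 <= snd p <= 1.

Definition S_oplus (p q : R * R) : R * R :=
  (Rmax (-1) (Rmin 1 (fst p + fst q)), 0).
Definition S_neg (p : R * R) : R * R := (- fst p, - snd p).
Definition S_pos (p : R * R) : R * R := (Rmax 0 (fst p), 0).
Definition S_negp (p : R * R) : R * R := (Rmin 0 (fst p), 0).
Definition S_zero : R * R := (0, 0).
Definition S_one : R * R := (1, 0).

Fixpoint evalS (env : nat -> R * R) (t : term) : R * R :=
  match t with
  | Var i => env i
  | TZero => S_zero
  | TOne => S_one
  | TOplus u v => S_oplus (evalS env u) (evalS env v)
  | TNeg u => S_neg (evalS env u)
  | TPos u => S_pos (evalS env u)
  | TNegP u => S_negp (evalS env u)
  end.

(* Every operation of S* except negation discards the second coordinate, and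
   negation maps 0 to 0; so as soon as a term contains an oplus, its value has
   second coordinate 0.  First coordinates are computed from first coordinates
   alone, hence the second coordinates of the arguments are irrelevant.  The
   bound on z comes from the truncation built into oplus, which is preserved
   by -, ^+ and ^-. *)
From Stdlib Require Import Reals Lra.
Open Scope R_scope.

Lemma truncate_bounds (x : R) : -1 <= Rmax (-1) (Rmin 1 x) <= 1.
Proof. unfold Rmax, Rmin; repeat destruct Rle_dec; lra. Qed.

Lemma evalS_fst_ext (env1 env2 : nat -> R * R) (t : term) :
  (forall i, fst (env1 i) = fst (env2 i)) ->
  fst (evalS env1 t) = fst (evalS env2 t).
Proof.
  intros Henv; induction t; simpl; unfold S_oplus, S_neg, S_pos, S_negp; simpl;
    try rewrite IHt; try rewrite IHt1, IHt2; auto.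
Qed.

Lemma evalS_has_oplus (env : nat -> R * R) (t : term) :
  has_oplus t -> exists z, -1 <= z <= 1 /\ evalS env t = (z, 0).
Proof.
  induction t as [i | | | u _ v _ | u IHu | u IHu | u IHu]; simpl; intros Hop;
    try contradiction.
  - eexists; split; [apply truncate_bounds | reflexivity].
  - destruct (IHu Hop) as [z [Hz ->]].
    exists (- z); unfold S_neg; simpl; rewrite Ropp_0; split; [lra | reflexivity].
  - destruct (IHu Hop) as [z [Hz ->]].
    exists (Rmax 0 z); split; [unfold Rmax; destruct Rle_dec; lra | reflexivity].
  - destruct (IHu Hop) as [z [Hz ->]].
    exists (Rmin 0 z); split; [unfold Rmin; destruct Rle_dec; lra | reflexivity].
Qed.

Theorem lemma3p4 (n : nat) (t : term) (a b : nat -> R) :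
  vars_below n t ->
  has_oplus t ->
  (forall i : nat, (i < n)%nat -> inS (a i, b i)) ->
  evalS (fun i => (a i, b i)) t = evalS (fun i => (a i, 0)) t /\
  exists z : R, -1 <= z <= 1 /\ evalS (fun i => (a i, 0)) t = (z, 0).
Proof.
  (* The truncation in oplus makes the result hold for arbitrary real
     arguments. *)
  intros _ Hop _.
  destruct (evalS_has_oplus (fun i => (a i, b i)) t Hop) as [z1 [_ E1]].
  destruct (evalS_has_oplus (fun i => (a i, 0)) t Hop) as [z2 [Hz2 E2]].
  assert (Hfst := evalS_fst_ext (fun i => (a i, b i)) (fun i => (a i, 0)) t
                    (fun i => eq_refl)).
  rewrite E1, E2 in Hfst; simpl in Hfst; subst z2.
  split; [congruence | exists z1; split; assumption].
Qed.
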